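(* For every fixed $\omega\in\Omega_0^*\cap\Omega_1^*$ and all real numbers $M,a,b$ with $M>0$ and $1/\alpha<a<b<1$, one has (with the convention $0/0=0$) $$\sup_{(u_1,u_2,v)\in[-M;M]^2\times[a;b]}\left\{\frac{|\ddot X(u_1,v,\omega)-\ddot X(u_2,v,\omega)|}{|u_1-u_2|^{v-1/\alpha}}\right\}<\infty.$$
   Context: Fix $\alpha\in(1,2)$. Let $Z_\alpha(ds)$ be an independently scattered symmetric $\alpha$-stable random measure on $\mathbb{R}$ with Lebesgue control measure on $(\Omega,\mathcal{F},\mathbb{P})$. For $x,\kappa\in\mathbb{R}$, $(x)_+^\kappa=x^\kappa$ if $x>0$ and $0$ otherwise. Let $\psi$ be a three times continuously differentiable compactly supported Daubechies mother wavelet generating an orthonormal basis of $L^2(\mathbb{R})$. For $(x,v)\in\mathbb{R}\times(1/\alpha;1)$, $\Psi(x,v)=\int_{\mathbb{R}}(x-s)_+^{v-1/\alpha}\psi(s)\,ds$; for $(j,k)\in\mathbb{Z}^2$, $\epsilon_{j,k}=2^{j/\alpha}\int_{\mathbb{R}}\psi(2^js-k)Z_\alpha(ds)$. $\Omega_0^*$ is an event of probability $1$ such that for every $\eta>0$ there is a positive finite random variable $C_\eta$ with $|\epsilon_{j,k}(\omega)|\le C_\eta(\omega)(3+|j|)^{1/\alpha+\eta}(3+|k|)^{1/\alpha+\eta}$ for all $\omega\in\Omega_0^*$, $(j,k)\in\mathbb{Z}^2$. $\Omega_1^*$ is an event of probability $1$ such that for every $l>0$ there is a positive finite random variable $C'_l$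 with $|\epsilon_{j,k}(\omega)|\le C'_l(\omega)2^{j/\alpha}$ for all $\omega\in\Omega_1^*$ and all $(j,k)\in\mathbb{Z}_+\times\mathbb{Z}$ with $|k|2^{-j}\le l$ (both events exist). The high frequency part $\ddot X$ is defined on $\Omega_0^*$, for $(u,v)\in\mathbb{R}\times(1/\alpha;1)$, by $\ddot X(u,v)=\sum_{j=0}^{\infty}\sum_{k\in\mathbb{Z}}2^{-jv}\epsilon_{j,k}\big(\Psi(2^ju-k,v)-\Psi(-k,v)\big)$ (series converging on $\Omega_0^*$ uniformly on compact subsets of $\mathbb{R}\times(1/\alpha;1)$). One may use that $\Psi$ and $\partial_x\Psi$ are continuous and satisfy $\sup_{(x,v)\in\mathbb{R}\times[a;b]}(3+|x|)^2(|\Psi(x,v)|+|\partial_x\Psi(x,v)|)<\infty$ for every compact $[a;b]\subset(1/\alpha;1)$. *)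

From Stdlib Require Import Reals Lra ZArith.
Open Scope R_scope.

(* Sum over k in Z, taken as the limit of symmetric partial sums
   f 0 + (f 1 + f (-1)) + (f 2 + f (-2)) + ... *)
Definition zsum_is (f : Z -> R) (l : R) : Prop :=
  infinite_sum
    (fun n : nat => if Nat.eqb n 0 then f 0%Z
                    else f (Z.of_nat n) + f (- Z.of_nat n)%Z) l.

(* The high-frequency part  Xdd(u,v) = sum_{j>=0} sum_{k in Z}
   2^{-jv} eps_{j,k} (Psi(2^j u - k, v) - Psi(-k, v)),
   as the relation "x is the value of the double series". *)
Definition inner_term (eps : Z -> Z -> R) (Psi : R -> R -> R)
  (u v : R) (j : nat) (k : Z) : R :=
  Rpower 2 (- (INR j) * v) * eps (Z.of_nat j) k *
  (Psi (Rpower 2 (INR j) * u - IZR k) v - Psi (- IZR k) v).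

Definition Xdd_is (eps : Z -> Z -> R) (Psi : R -> R -> R)
  (u v x : R) : Prop :=
  exists s : nat -> R,
    (forall j : nat, zsum_is (inner_term eps Psi u v j) (s j)) /\
    infinite_sum s x.

(* The almost-sure bound defining Omega_0^* (evaluated at a fixed omega). *)
Definition Omega0_bound (alpha : R) (eps : Z -> Z -> R) : Prop :=
  forall eta : R, 0 < eta ->
    exists C : R, 0 < C /\
      forall j k : Z,
        Rabs (eps j k) <=
          C * Rpower (3 + Rabs (IZR j)) (1 / alpha + eta)
            * Rpower (3 + Rabs (IZR k)) (1 / alpha + eta).

(* The almost-sure bound defining Omega_1^* (evaluated at a fixed omega). *)
Definition Omega1_bound (alpha : R) (eps : Z -> Z -> R) : Prop :=
  forall l : R, 0 < l ->
    exists C : R, 0 < C /\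
      forall (j : nat) (k : Z),
        Rabs (IZR k) * Rpower 2 (- INR j) <= l ->
        Rabs (eps (Z.of_nat j) k) <= C * Rpower 2 (INR j / alpha).

Definition Psi_props (alpha : R) (Psi dPsi : R -> R -> R) : Prop :=
  (forall x v, 1 / alpha < v < 1 ->
     derivable_pt_lim (fun y => Psi y v) x (dPsi x v)) /\
  (forall x v, 1 / alpha < v < 1 ->
     forall e, 0 < e -> exists d, 0 < d /\
       forall x' v', 1 / alpha < v' < 1 -> Rabs (x' - x) < d -> Rabs (v' - v) < d ->
         Rabs (Psi x' v' - Psi x v) < e /\ Rabs (dPsi x' v' - dPsi x v) < e) /\
  (forall a b, 1 / alpha < a -> a <= b -> b < 1 ->
     exists K, forall x v, a <= v <= b ->
       (3 + Rabs x) ^ 2 * (Rabs (Psi x v) + Rabs (dPsi x v)) <= K).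

From Stdlib Require Import Reals Lra Lia ZArith.
From Coquelicot Require Import Coquelicot.
Open Scope R_scope.

(* At dyadic level j the inner series over k is dominated, through the decay (3 + |x|)^-2 of Psi
   and of its derivative, by 2^(-jv) sum_k |eps_(j,k)| (3 + |2^j u - k|)^-2.  The Omega_1 bound
   controls the indices |k| <= (M + 1) 2^j and the Omega_0 bound the others, so this sum is
   O(2^(j/alpha)) and level j is O(2^(-j(v - 1/alpha))).  For u1 <> u2 split the levels at
   2^j |u1 - u2| = 1: below the threshold the mean value theorem bounds the difference of the two
   levels by O(|u1 - u2| 2^(j(1 - v + 1/alpha))), above it the two levels are bounded separately.
   Both geometric sums are O(|u1 - u2|^(v - 1/alpha)), with constants uniform in v in [a, b]. *)

Lemma Rpower_pos x y : 0 < Rpower x y.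
Proof. apply exp_pos. Qed.

Lemma Rpower_1_base (c : R) : Rpower 1 c = 1.
Proof. unfold Rpower. rewrite ln_1, Rmult_0_r. apply exp_0. Qed.

Lemma Rpower_opp_le q x y : 0 <= q -> 0 < x <= y -> Rpower y (- q) <= Rpower x (- q).
Proof.
  intros. rewrite !Rpower_Ropp. apply Rinv_le_contravar; [apply Rpower_pos|].
  apply Rle_Rpower_l; lra.
Qed.

Lemma Rpower_INR_mul (x c : R) (n : nat) : 0 < x -> Rpower x (INR n * c) = Rpower x c ^ n.
Proof.
  intro Hx. rewrite Rmult_comm, <- Rpower_mult, Rpower_pow by apply Rpower_pos. reflexivity.
Qed.

(** * Series over N and Z *)

Lemma Un_cv_abs_le (u : nat -> R) (l B : R) :
  Un_cv u l -> (forall n, Rabs (u n) <= B) -> Rabs l <= B.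
Proof.
  intros Hu Hb. destruct (Rle_dec (Rabs l) B) as [h|h]; [exact h|].
  destruct (Hu (Rabs l - B)) as [N HN]; [lra|].
  specialize (HN N (le_n N)). unfold R_dist in HN. specialize (Hb N).
  pose proof (Rabs_triang_inv l (u N)) as Htri. rewrite Rabs_minus_sym in Htri. lra.
Qed.

Lemma Series_dominated (g d : nat -> R) (B : R) :
  (forall n, Rabs (g n) <= d n) -> (forall N, sum_f_R0 d N <= B) ->
  infinite_sum g (Series g) /\ Rabs (Series g) <= B.
Proof.
  intros Hg Hd.
  assert (Habs : forall N, sum_f_R0 (fun n => Rabs (g n)) N <= B).
  { intro N. eapply Rle_trans; [|apply (Hd N)]. apply sum_Rle. auto. }
  destruct (growing_cv (sum_f_R0 (fun n => Rabs (g n)))) as [l Hl].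
  { intro n. simpl. pose proof (Rabs_pos (g (S n))). lra. }
  { exists B. intros x [N ->]. auto. }
  assert (Hex : ex_series g).
  { apply ex_series_Rabs. exists l. apply is_series_Reals. exact Hl. }
  assert (Hsum : infinite_sum g (Series g))
    by (apply is_series_Reals, Series_correct; exact Hex).
  split; [exact Hsum|].
  apply (Un_cv_abs_le (sum_f_R0 g)); [exact Hsum|].
  intro N. eapply Rle_trans; [apply sum_f_R0_triangle|]. apply Habs.
Qed.

(* [zsum_is f l] unfolds to [infinite_sum (zsum_term f) l]. *)
Definition zsum_term (f : Z -> R) (n : nat) : R :=
  if Nat.eqb n 0 then f 0%Z else f (Z.of_nat n) + f (- Z.of_nat n)%Z.

Lemma zsum_term_le (f g : Z -> R) :
  (forall k, f k <= g k) -> forall n, zsum_term f n <= zsum_term g n.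
Proof. intros H n. unfold zsum_term. destruct (Nat.eqb n 0); auto. apply Rplus_le_compat; auto. Qed.

Lemma zsum_term_abs (f : Z -> R) n : Rabs (zsum_term f n) <= zsum_term (fun k => Rabs (f k)) n.
Proof. unfold zsum_term. destruct (Nat.eqb n 0); [lra|apply Rabs_triang]. Qed.

Lemma zsum_term_le_split (f h : Z -> R) (F : nat -> R) :
  (forall k, f k <= h k + F (Z.abs_nat k)) -> (forall m, 0 <= F m) ->
  forall n, zsum_term f n <= zsum_term h n + 2 * F n.
Proof.
  intros H HF n. unfold zsum_term. destruct (Nat.eqb_spec n 0) as [->|_].
  - pose proof (H 0%Z). pose proof (HF 0%nat). simpl in *. lra.
  - pose proof (H (Z.of_nat n)) as H1. pose proof (H (- Z.of_nat n)%Z) as H2.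
    replace (Z.abs_nat (Z.of_nat n)) with n in H1 by lia.
    replace (Z.abs_nat (- Z.of_nat n)) with n in H2 by lia. lra.
Qed.

Lemma sum_zsum_term_scal (c : R) (f : Z -> R) N :
  sum_f_R0 (zsum_term (fun k => c * f k)) N = c * sum_f_R0 (zsum_term f) N.
Proof.
  induction N as [|N IH]; simpl; unfold zsum_term in *; simpl in *; [ring|rewrite IH; ring].
Qed.

Lemma sum_zsum_term_plus (f g : Z -> R) N :
  sum_f_R0 (zsum_term (fun k => f k + g k)) N = sum_f_R0 (zsum_term f) N + sum_f_R0 (zsum_term g) N.
Proof.
  induction N as [|N IH]; simpl; unfold zsum_term in *; simpl in *; [ring|rewrite IH; ring].
Qed.

Lemma sum_zsum_term_minus (f g : Z -> R) N :
  sum_f_R0 (zsum_term (fun k => f k - g k)) N = sum_f_R0 (zsum_term f) N - sum_f_R0 (zsum_term g) N.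
Proof.
  induction N as [|N IH]; simpl; unfold zsum_term in *; simpl in *; [ring|rewrite IH; ring].
Qed.

Lemma sum_zsum_term_telescope (f : Z -> R) (Phi : R -> R) :
  (forall k, f k <= Phi (IZR k + 1) - Phi (IZR k)) ->
  forall N, sum_f_R0 (zsum_term f) N <= Phi (INR N + 1) - Phi (- INR N).
Proof.
  intros H N. induction N as [|N IH].
  - simpl. unfold zsum_term. simpl. replace (-0) with 0 by ring. exact (H 0%Z).
  - simpl sum_f_R0. unfold zsum_term at 2. simpl Nat.eqb. cbv iota.
    pose proof (H (Z.of_nat (S N))) as H1. pose proof (H (- Z.of_nat (S N))%Z) as H2.
    rewrite opp_IZR, <- INR_IZR_INZ, S_INR in H2. rewrite <- INR_IZR_INZ, S_INR in H1.
    rewrite S_INR. replace (- (INR N + 1) + 1) with (- INR N) in H2 by ring. lra.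
Qed.

(** * The weight (3 + |x|)^-2 *)

Definition decay (x : R) : R := / (3 + Rabs x) ^ 2.

Lemma decay_pos x : 0 < decay x.
Proof. unfold decay. pose proof (Rabs_pos x). apply Rinv_0_lt_compat. nra. Qed.

Lemma decay_shift x c : Rabs (c - x) <= 1 -> decay c <= 2 * decay x.
Proof.
  intro Hc. unfold decay.
  pose proof (Rabs_triang_inv x c). rewrite Rabs_minus_sym in Hc.
  pose proof (Rabs_pos c). pose proof (Rabs_pos x).
  apply Rmult_le_reg_r with ((3 + Rabs c) ^ 2 * (3 + Rabs x) ^ 2); [nra|].
  field_simplify; nra.
Qed.

(* Its unit increments dominate [2 * decay] while it stays in [-1, 1], so the sum of
   [decay (y - k)] over [k] telescopes to at most 1. *)

Definition decay_primitive (t : R) : R := t / (2 + Rabs t).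

Lemma decay_primitive_bound t : Rabs (decay_primitive t) <= 1.
Proof.
  unfold decay_primitive. pose proof (Rabs_pos t).
  rewrite Rabs_div, (Rabs_right (2 + Rabs t)) by lra.
  apply Rmult_le_reg_r with (2 + Rabs t); [lra|].
  unfold Rdiv. rewrite Rmult_assoc, Rinv_l by lra. lra.
Qed.

Lemma decay_le_primitive_step t :
  decay t <= (decay_primitive (t + 1) - decay_primitive t) / 2.
Proof.
  unfold decay, decay_primitive. destruct (Rle_dec 0 t).
  - rewrite (Rabs_right t), (Rabs_right (t + 1)) by lra.
    replace (((t + 1) / (2 + (t + 1)) - t / (2 + t)) / 2) with (/ ((3 + t) * (2 + t)))
      by (field; lra).
    apply Rinv_le_contravar; nra.
  - destruct (Rle_dec (t + 1) 0).
    + rewrite (Rabs_left1 t), (Rabs_left1 (t + 1)) by lra.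
      replace (((t + 1) / (2 + - (t + 1)) - t / (2 + - t)) / 2) with (/ ((1 - t) * (2 - t)))
        by (field; lra).
      apply Rinv_le_contravar; nra.
    + rewrite (Rabs_left1 t), (Rabs_right (t + 1)) by lra.
      replace (((t + 1) / (2 + (t + 1)) - t / (2 + - t)) / 2)
        with ((1 - t - t * t) * / ((3 + t) * (2 - t))) by (field; lra).
      apply Rle_trans with (/ ((3 + t) * (2 - t))); [apply Rinv_le_contravar; nra|].
      rewrite <- (Rmult_1_l (/ ((3 + t) * (2 - t)))) at 1.
      apply Rmult_le_compat_r; [apply Rlt_le, Rinv_0_lt_compat; nra|nra].
Qed.

Lemma sum_decay_le_1 (y : R) N : sum_f_R0 (zsum_term (fun k => decay (y - IZR k))) N <= 1.
Proof.
  eapply Rle_trans.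
  - apply (sum_zsum_term_telescope _ (fun x => decay_primitive (x - y) / 2)).
    intro k. replace (decay (y - IZR k)) with (decay (IZR k - y))
      by (unfold decay; now rewrite Rabs_minus_sym).
    replace (IZR k + 1 - y) with (IZR k - y + 1) by ring.
    pose proof (decay_le_primitive_step (IZR k - y)). lra.
  - pose proof (decay_primitive_bound (INR N + 1 - y)) as H1.
    pose proof (decay_primitive_bound (- INR N - y)) as H2.
    apply Rabs_le_between in H1. apply Rabs_le_between in H2. lra.
Qed.

(** * Wavelet coefficients against the weight *)

Lemma decay_far_from_grid (M P y x : R) :
  0 <= M -> Rabs y <= P * M -> (M + 1) * P <= Rabs x ->
  decay (y - x) <= (M + 1) ^ 2 * decay x.
Proof.
  intros HM Hy Hx. unfold decay.
  pose proof (Rabs_triang_inv x y) as Htri. rewrite Rabs_minus_sym in Htri.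
  pose proof (Rabs_pos x). pose proof (Rabs_pos y). pose proof (Rabs_pos (y - x)).
  assert (Hgap : 3 + Rabs x <= (M + 1) * (3 + Rabs (y - x))).
  { assert (0 <= M * (3 + Rabs x - (M + 1) * P)) by (apply Rmult_le_pos; lra). nra. }
  rewrite <- (Rinv_inv ((M + 1) ^ 2)), <- Rinv_mult.
  replace (/ (M + 1) ^ 2 * (3 + Rabs x) ^ 2) with (((3 + Rabs x) / (M + 1)) ^ 2)
    by (field; lra).
  apply Rinv_le_contravar; [apply pow_lt, Rdiv_lt_0_compat; lra|].
  apply pow_incr. split; [apply Rdiv_le_0_compat; lra|].
  apply Rmult_le_reg_r with (M + 1); [lra|].
  unfold Rdiv. rewrite Rmult_assoc, Rinv_l by lra. lra.
Qed.

Lemma Rpower_opp_pred_le_diff q x : 0 < q -> 1 < x ->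
  Rpower x (- q - 1) <= / q * (Rpower (x - 1) (- q) - Rpower x (- q)).
Proof.
  intros Hq Hx. unfold Rpower.
  set (A := exp (- q * ln x)).
  assert (HA : 0 < A) by apply exp_pos.
  assert (E1 : exp ((- q - 1) * ln x) = A / x).
  { replace ((- q - 1) * ln x) with (- q * ln x + - ln x) by ring.
    rewrite exp_plus, exp_Ropp, exp_ln by lra. reflexivity. }
  assert (E2 : exp (- q * ln (x - 1)) = A * exp (q * (ln x - ln (x - 1)))).
  { unfold A. rewrite <- exp_plus. f_equal. ring. }
  assert (Hlog : / x <= ln x - ln (x - 1)).
  { pose proof (exp_ineq1_le (ln ((x - 1) / x))) as Hexp.
    rewrite exp_ln in Hexp by (apply Rdiv_lt_0_compat; lra).
    unfold Rdiv in Hexp |- *. rewrite ln_mult, ln_Rinv in Hexp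
      by (try apply Rinv_0_lt_compat; lra).
    replace ((x - 1) * / x) with (1 - / x) in Hexp by (field; lra). lra. }
  pose proof (exp_ineq1_le (q * (ln x - ln (x - 1)))) as Hexp.
  assert (q * / x <= q * (ln x - ln (x - 1))) by (apply Rmult_le_compat_l; lra).
  rewrite E1, E2. replace (A / x) with (/ q * (A * (q * / x))) by (field; lra).
  apply Rmult_le_compat_l; [apply Rlt_le, Rinv_0_lt_compat; lra|nra].
Qed.

Definition far_weight (L q : R) (n : nat) : R :=
  if Rle_dec (INR n) L then 0 else Rpower (3 + INR n) (- q - 1).

Lemma far_weight_nonneg L q n : 0 <= far_weight L q n.
Proof. unfold far_weight. destruct (Rle_dec (INR n) L); [lra|apply Rlt_le, Rpower_pos]. Qed.

Lemma sum_far_weight_le L q : 0 <= L -> 0 < q -> forall N,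
  sum_f_R0 (far_weight L q) N <= / q * Rpower (2 + L) (- q).
Proof.
  intros HL Hq.
  assert (Hq' : 0 < / q) by (apply Rinv_0_lt_compat; lra).
  assert (Inv : forall N, sum_f_R0 (far_weight L q) N <=
     / q * Rmax 0 (Rpower (2 + L) (- q) - Rpower (3 + INR N) (- q))).
  { induction N as [|N IH].
    - simpl. unfold far_weight. destruct (Rle_dec (INR 0) L) as [_|h]; [|simpl in h; lra].
      apply Rmult_le_pos; [lra|apply Rmax_l].
    - simpl sum_f_R0. unfold far_weight at 2. rewrite S_INR.
      pose proof (pos_INR N).
      destruct (Rle_dec (INR N + 1) L) as [h|h].
      + rewrite Rplus_0_r. eapply Rle_trans; [exact IH|].
        apply Rmult_le_compat_l; [lra|]. apply Rle_max_compat_l.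
        pose proof (Rpower_opp_le q (3 + INR N) (3 + (INR N + 1))). lra.
      + pose proof (Rpower_opp_le q (2 + L) (3 + INR N)).
        pose proof (Rpower_opp_le q (2 + L) (3 + (INR N + 1))).
        pose proof (Rpower_opp_pred_le_diff q (3 + (INR N + 1)) Hq) as Hstep.
        replace (3 + (INR N + 1) - 1) with (3 + INR N) in Hstep by ring.
        rewrite Rmax_right in IH |- * by lra. nra. }
  intro N. eapply Rle_trans; [apply Inv|]. apply Rmult_le_compat_l; [lra|].
  apply Rmax_lub; [apply Rlt_le, Rpower_pos|].
  pose proof (Rpower_pos (3 + INR N) (- q)). lra.
Qed.

Lemma linear_le_Rpower_2 (j : nat) : 3 + INR j <= 4 * Rpower 2 (INR j / 2).
Proof.
  assert (Hsqrt2 : 4 / 3 <= Rpower 2 (/ 2)).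
  { assert (Rpower 2 (/ 2) * Rpower 2 (/ 2) = 2).
    { rewrite <- Rpower_plus. replace (/ 2 + / 2) with 1 by field. apply Rpower_1; lra. }
    pose proof (Rpower_pos 2 (/ 2)). nra. }
  induction j as [|j IH].
  - simpl. replace (0 / 2) with 0 by field. rewrite Rpower_O; lra.
  - rewrite S_INR. replace ((INR j + 1) / 2) with (INR j / 2 + / 2) by field.
    rewrite Rpower_plus. pose proof (Rpower_pos 2 (INR j / 2)). pose proof (pos_INR j). nra.
Qed.

Lemma Rabs_IZR_abs_nat (k : Z) : Rabs (IZR k) = INR (Z.abs_nat k).
Proof. rewrite INR_IZR_INZ, Nat2Z.inj_abs_nat, abs_IZR. reflexivity. Qed.

Section EpsWeightedSum.

Variables (alpha : R) (eps : Z -> Z -> R) (M C0 C1 : R).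

(* The exponent [eta] of Omega_0: since [1 / alpha + q = 1 - q], the far coefficients leave the
   summable tail (3 + |k|)^(-1-q), and the resulting factor (3 + j) 2^(-qj) fits in 2^(j/alpha). *)
Let q := (1 - 1 / alpha) / 2.

Hypotheses (Halpha : 1 < alpha) (HM : 0 < M) (HC0 : 0 < C0) (HC1 : 0 < C1).

Hypothesis Heps_far : forall j k : Z,
  Rabs (eps j k) <=
    C0 * Rpower (3 + Rabs (IZR j)) (1 / alpha + q) * Rpower (3 + Rabs (IZR k)) (1 / alpha + q).

Hypothesis Heps_near : forall (j : nat) (k : Z),
  Rabs (IZR k) * Rpower 2 (- INR j) <= M + 1 ->
  Rabs (eps (Z.of_nat j) k) <= C1 * Rpower 2 (INR j / alpha).

Lemma q_range : 0 < q /\ 1 / alpha + q = 1 - q /\ 1 / 2 - q <= 1 / alpha.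
Proof.
  assert (0 < 1 / alpha < 1).
  { split; [apply Rdiv_lt_0_compat; lra|].
    apply Rmult_lt_reg_r with alpha; [lra|]. unfold Rdiv. rewrite Rmult_assoc, Rinv_l; lra. }
  unfold q. repeat split; lra.
Qed.

Lemma eps_decay_le (j : nat) (y : R) (k : Z) :
  Rabs y <= Rpower 2 (INR j) * M ->
  Rabs (eps (Z.of_nat j) k) * decay (y - IZR k) <=
    C1 * Rpower 2 (INR j / alpha) * decay (y - IZR k) +
    C0 * (3 + INR j) * (M + 1) ^ 2 * far_weight ((M + 1) * Rpower 2 (INR j)) q (Z.abs_nat k).
Proof.
  intro Hy. destruct q_range as [Hq [Hp _]].
  pose proof (decay_pos (y - IZR k)) as Hd. pose proof (pos_INR j) as Hj.
  set (P := Rpower 2 (INR j)) in *. assert (HP : 0 < P) by apply Rpower_pos.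
  unfold far_weight. rewrite <- Rabs_IZR_abs_nat.
  destruct (Rle_dec (Rabs (IZR k)) ((M + 1) * P)) as [Hnear|Hfar].
  - rewrite Rmult_0_r, Rplus_0_r. apply Rmult_le_compat_r; [lra|]. apply Heps_near.
    rewrite Rpower_Ropp. fold P. apply Rmult_le_reg_r with P; [lra|].
    rewrite Rmult_assoc, Rinv_l by lra. lra.
  - apply Rnot_le_lt in Hfar.
    pose proof (Heps_far (Z.of_nat j) k) as He.
    rewrite <- INR_IZR_INZ, (Rabs_right (INR j)), Hp in He by lra.
    assert (Hpj : Rpower (3 + INR j) (1 - q) <= 3 + INR j).
    { rewrite <- (Rpower_1 (3 + INR j)) at 2 by lra. apply Rle_Rpower; lra. }
    pose proof (decay_far_from_grid M P y (IZR k) ltac:(lra) Hy ltac:(lra)) as Hdk.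
    assert (Hpow : Rpower (3 + Rabs (IZR k)) (1 - q) * decay (IZR k)
                   = Rpower (3 + Rabs (IZR k)) (- q - 1)).
    { pose proof (Rabs_pos (IZR k)).
      unfold decay. rewrite <- Rpower_pow, <- Rpower_Ropp, <- Rpower_plus by lra.
      f_equal. simpl. ring. }
    pose proof (Rpower_pos (3 + Rabs (IZR k)) (1 - q)).
    pose proof (Rpower_pos (3 + INR j) (1 - q)).
    pose proof (decay_pos (IZR k)).
    assert (0 <= C1 * Rpower 2 (INR j / alpha) * decay (y - IZR k))
      by (pose proof (Rpower_pos 2 (INR j / alpha)); apply Rmult_le_pos; nra).
    apply Rle_trans with
      (C0 * (3 + INR j) * Rpower (3 + Rabs (IZR k)) (1 - q) * ((M + 1) ^ 2 * decay (IZR k))).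
    + apply Rmult_le_compat; [apply Rabs_pos|lra| |exact Hdk].
      eapply Rle_trans; [exact He|]. apply Rmult_le_compat_r; [lra|].
      apply Rmult_le_compat_l; lra.
    + rewrite <- Hpow. apply Req_le in Hpow. nra.
Qed.

Lemma level_factor_le (j : nat) :
  (3 + INR j) * Rpower (2 + (M + 1) * Rpower 2 (INR j)) (- q) <= 4 * Rpower 2 (INR j / alpha).
Proof.
  destruct q_range as [Hq [_ Hhalf]]. pose proof (pos_INR j).
  assert (Hbase : Rpower (2 + (M + 1) * Rpower 2 (INR j)) (- q) <= Rpower 2 (INR j * - q)).
  { rewrite <- Rpower_mult. apply Rpower_opp_le; [lra|].
    pose proof (Rpower_pos 2 (INR j)). split; [lra|nra]. }
  eapply Rle_trans.
  { apply Rmult_le_compat; [lra|apply Rlt_le, Rpower_pos|apply linear_le_Rpower_2|exact Hbase]. }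
  rewrite Rmult_assoc, <- Rpower_plus. apply Rmult_le_compat_l; [lra|].
  apply Rle_Rpower; [lra|]. unfold Rdiv.
  assert (INR j * (/ 2 - q) <= INR j * / alpha)
    by (apply Rmult_le_compat_l; [lra|]; unfold Rdiv in Hhalf; lra).
  nra.
Qed.

Lemma sum_eps_decay_le (j : nat) (y : R) N :
  Rabs y <= Rpower 2 (INR j) * M ->
  sum_f_R0 (zsum_term (fun k => Rabs (eps (Z.of_nat j) k) * decay (y - IZR k))) N <=
    (C1 + 8 * C0 * (M + 1) ^ 2 / q) * Rpower 2 (INR j / alpha).
Proof.
  intro Hy. destruct q_range as [Hq _]. pose proof (pos_INR j).
  set (E := Rpower 2 (INR j / alpha)). assert (HE : 0 < E) by apply Rpower_pos.
  set (L := (M + 1) * Rpower 2 (INR j)).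
  assert (HL : 0 <= L) by (pose proof (Rpower_pos 2 (INR j)); unfold L; nra).
  set (Cf := C0 * (3 + INR j) * (M + 1) ^ 2).
  assert (HCf : 0 <= Cf)
    by (unfold Cf; pose proof (pow2_ge_0 (M + 1)); apply Rmult_le_pos; [apply Rmult_le_pos|]; lra).
  eapply Rle_trans.
  { apply sum_Rle. intros n _.
    apply (zsum_term_le_split _ (fun k => C1 * E * decay (y - IZR k))
                               (fun m => Cf * far_weight L q m)).
    - intro k. apply eps_decay_le. exact Hy.
    - intro m. apply Rmult_le_pos; [lra|apply far_weight_nonneg]. }
  rewrite plus_sum, sum_zsum_term_scal.
  rewrite (sum_eq (fun n => 2 * (Cf * far_weight L q n)) (fun n => far_weight L q n * (2 * Cf)))
    by (intros; ring).
  rewrite <- scal_sum.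
  pose proof (sum_decay_le_1 y N) as Hnear.
  pose proof (sum_far_weight_le L q HL Hq N) as Hfar.
  pose proof (level_factor_le j) as Hfactor. fold L E in Hfactor.
  assert (Hq' : 0 < / q) by (apply Rinv_0_lt_compat; lra).
  assert (C1 * E * sum_f_R0 (zsum_term (fun k => decay (y - IZR k))) N <= C1 * E)
    by (rewrite <- (Rmult_1_r (C1 * E)) at 2; apply Rmult_le_compat_l; nra).
  assert (sum_f_R0 (far_weight L q) N * (2 * Cf) <= 2 * Cf * (/ q * Rpower (2 + L) (- q)))
    by nra.
  assert (2 * Cf * (/ q * Rpower (2 + L) (- q)) <= 8 * C0 * (M + 1) ^ 2 / q * E).
  { unfold Cf, Rdiv. pose proof (pow2_ge_0 (M + 1)).
    replace (2 * (C0 * (3 + INR j) * (M + 1) ^ 2) * (/ q * Rpower (2 + L) (- q)))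
      with (2 * C0 * (M + 1) ^ 2 * / q * ((3 + INR j) * Rpower (2 + L) (- q))) by ring.
    replace (8 * C0 * (M + 1) ^ 2 * / q * E) with (2 * C0 * (M + 1) ^ 2 * / q * (4 * E)) by ring.
    apply Rmult_le_compat_l; [|exact Hfactor].
    apply Rmult_le_pos; [|lra]. nra. }
  lra.
Qed.

End EpsWeightedSum.

Lemma eps_weighted_sum_bound (alpha : R) (eps : Z -> Z -> R) (M : R) :
  1 < alpha -> 0 < M -> Omega0_bound alpha eps -> Omega1_bound alpha eps ->
  exists A, 0 <= A /\ forall (j : nat) (y : R), Rabs y <= Rpower 2 (INR j) * M ->
    forall N, sum_f_R0 (zsum_term (fun k => Rabs (eps (Z.of_nat j) k) * decay (y - IZR k))) N
              <= A * Rpower 2 (INR j / alpha).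
Proof.
  intros Halpha HM H0 H1.
  assert (Hq : 0 < (1 - 1 / alpha) / 2).
  { assert (1 / alpha < 1) by (apply Rmult_lt_reg_r with alpha; [lra|];
      unfold Rdiv; rewrite Rmult_assoc, Rinv_l; lra). lra. }
  destruct (H0 _ Hq) as [C0 [HC0 Hfar]]. destruct (H1 (M + 1) ltac:(lra)) as [C1 [HC1 Hnear]].
  exists (C1 + 8 * C0 * (M + 1) ^ 2 / ((1 - 1 / alpha) / 2)). split.
  - assert (0 <= 8 * C0 * (M + 1) ^ 2 / ((1 - 1 / alpha) / 2)).
    { apply Rdiv_le_0_compat; [|exact Hq]. pose proof (pow2_ge_0 (M + 1)). nra. }
    lra.
  - intros j y Hy N. eapply sum_eps_decay_le; eauto.
Qed.

(** * Geometric sums over dyadic levels *)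

Lemma sum_geom_decreasing_below (q Y : R) (c : nat -> bool) :
  0 <= q < 1 -> 0 <= Y -> (forall n, c n = true -> q ^ n <= Y) ->
  forall N, sum_f_R0 (fun n => if c n then q ^ n else 0) N <= Y / (1 - q).
Proof.
  intros Hq HY Hc.
  assert (H1q : 0 < / (1 - q)) by (apply Rinv_0_lt_compat; lra).
  assert (Inv : forall N, sum_f_R0 (fun n => if c n then q ^ n else 0) N <=
                          Rmax 0 ((Y - q ^ S N) / (1 - q))).
  { induction N as [|N IH].
    - simpl. destruct (c 0%nat) eqn:E; [|apply Rmax_l].
      pose proof (Hc _ E). simpl in *. eapply Rle_trans; [|apply Rmax_r].
      apply Rmult_le_reg_r with (1 - q); [lra|].
      unfold Rdiv. rewrite Rmult_assoc, Rinv_l by lra. nra.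
    - simpl sum_f_R0. pose proof (pow_le q (S N) (proj1 Hq)) as HqN.
      destruct (c (S N)) eqn:E.
      + pose proof (Hc _ E) as HcN.
        assert (0 <= (Y - q ^ S N) / (1 - q)) by (apply Rmult_le_pos; lra).
        rewrite Rmax_right in IH by lra. eapply Rle_trans; [|apply Rmax_r].
        replace ((Y - q ^ S (S N)) / (1 - q)) with ((Y - q ^ S N) / (1 - q) + q ^ S N)
          by (simpl; field; lra). simpl in *. lra.
      + rewrite Rplus_0_r. eapply Rle_trans; [exact IH|]. apply Rle_max_compat_l.
        apply Rmult_le_compat_r; [lra|]. simpl in *.
        assert (0 <= (1 - q) * (q * q ^ N)) by (apply Rmult_le_pos; lra). nra. }
  intro N. eapply Rle_trans; [apply Inv|]. apply Rmax_lub.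
  - apply Rmult_le_pos; lra.
  - apply Rmult_le_compat_r; [lra|]. pose proof (pow_le q (S N) (proj1 Hq)). lra.
Qed.

Lemma sum_geom_increasing_below (x r Y : R) (c : nat -> bool) :
  1 < r -> 0 <= x -> 0 <= Y -> (forall n, c n = true -> x * r ^ n <= Y) ->
  forall N, sum_f_R0 (fun n => if c n then x * r ^ n else 0) N <= Y * (r / (r - 1)).
Proof.
  intros Hr Hx HY Hc.
  assert (Hk : 1 <= r / (r - 1)).
  { apply Rmult_le_reg_r with (r - 1); [lra|].
    unfold Rdiv. rewrite Rmult_assoc, Rinv_l by lra. lra. }
  assert (Hpos : forall n, 0 <= x * r ^ n)
    by (intro; apply Rmult_le_pos; [lra|apply pow_le; lra]).
  assert (Inv : forall N, sum_f_R0 (fun n => if c n then x * r ^ n else 0) N <=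
                          Rmin (x * r ^ N) Y * (r / (r - 1))).
  { induction N as [|N IH].
    - simpl. pose proof (Hpos 0%nat). simpl in *. destruct (c 0%nat) eqn:E.
      + pose proof (Hc _ E). simpl in *. rewrite Rmin_left by lra. nra.
      + apply Rmult_le_pos; [apply Rmin_glb|]; lra.
    - simpl sum_f_R0. pose proof (Hpos N). pose proof (Rmin_l (x * r ^ N) Y).
      assert (HS : x * r ^ S N = r * (x * r ^ N)) by (simpl; ring).
      destruct (c (S N)) eqn:E.
      + pose proof (Hc _ E). rewrite (Rmin_left (x * r ^ S N)) by lra. rewrite HS in *.
        assert (Rmin (x * r ^ N) Y * (r / (r - 1)) <= x * r ^ N * (r / (r - 1)))
          by (apply Rmult_le_compat_r; lra).
        replace (r * (x * r ^ N) * (r / (r - 1)))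
          with (x * r ^ N * (r / (r - 1)) + r * (x * r ^ N)) by (field; lra). lra.
      + rewrite Rplus_0_r. eapply Rle_trans; [exact IH|].
        apply Rmult_le_compat_r; [lra|]. apply Rle_min_compat_r. rewrite HS. nra. }
  intro N. eapply Rle_trans; [apply Inv|]. apply Rmult_le_compat_r; [lra|apply Rmin_r].
Qed.

Definition coarse_level (d : R) (j : nat) : bool :=
  if Rle_dec (Rpower 2 (INR j) * d) 1 then true else false.

Lemma dyadic_small_le (c d : R) (j : nat) : 0 <= c <= 1 -> 0 < d ->
  Rpower 2 (INR j) * d <= 1 -> d * Rpower 2 (1 - c) ^ j <= Rpower d c.
Proof.
  intros Hc Hd Hsmall. pose proof (Rpower_pos 2 (INR j)).
  assert (Hsplit : d * Rpower 2 (1 - c) ^ j = Rpower d c * Rpower (Rpower 2 (INR j) * d) (1 - c)).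
  { rewrite <- Rpower_INR_mul, <- Rpower_mult_distr, <- (Rpower_mult 2) by lra.
    rewrite <- Rmult_assoc, (Rmult_comm (Rpower d c)), Rmult_assoc, <- Rpower_plus.
    replace (c + (1 - c)) with 1 by ring. rewrite Rpower_1 by lra. ring. }
  rewrite Hsplit. rewrite <- (Rmult_1_r (Rpower d c)) at 2.
  apply Rmult_le_compat_l; [apply Rlt_le, Rpower_pos|].
  rewrite <- (Rpower_1_base (1 - c)) at 2. apply Rle_Rpower_l; [lra|]. split; [nra|lra].
Qed.

Lemma dyadic_large_le (c d : R) (j : nat) : 0 <= c -> 0 < d ->
  1 < Rpower 2 (INR j) * d -> Rpower 2 (- c) ^ j <= Rpower d c.
Proof.
  intros Hc Hd Hlarge. pose proof (Rpower_pos 2 (INR j)).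
  rewrite <- Rpower_INR_mul by lra.
  replace (INR j * - c) with (- (INR j * c)) by ring.
  rewrite Rpower_Ropp, <- Rpower_mult.
  apply Rmult_le_reg_l with (Rpower (Rpower 2 (INR j)) c); [apply Rpower_pos|].
  rewrite Rinv_r by (apply Rgt_not_eq, Rpower_pos).
  rewrite Rpower_mult_distr by lra. rewrite <- (Rpower_1_base c) at 1.
  apply Rle_Rpower_l; lra.
Qed.

Definition holder_constant (c : R) : R :=
  Rpower 2 (1 - c) / (Rpower 2 (1 - c) - 1) + 1 / (1 - Rpower 2 (- c)).

Lemma holder_constant_le (c1 c c2 : R) : 0 < c1 <= c -> c <= c2 < 1 ->
  holder_constant c <=
    Rpower 2 (1 - c2) / (Rpower 2 (1 - c2) - 1) + 1 / (1 - Rpower 2 (- c1)).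
Proof.
  intros Hc1 Hc2. unfold holder_constant.
  assert (Hr : 1 < Rpower 2 (1 - c2))
    by (rewrite <- (Rpower_O 2) at 1 by lra; apply Rpower_lt; lra).
  assert (Hq : Rpower 2 (- c1) < 1) by (rewrite <- (Rpower_O 2) by lra; apply Rpower_lt; lra).
  assert (Hrr : Rpower 2 (1 - c2) <= Rpower 2 (1 - c)) by (apply Rle_Rpower; lra).
  assert (Hqq : Rpower 2 (- c) <= Rpower 2 (- c1)) by (apply Rle_Rpower; lra).
  apply Rplus_le_compat.
  - replace (Rpower 2 (1 - c) / (Rpower 2 (1 - c) - 1)) with (1 + / (Rpower 2 (1 - c) - 1))
      by (field; lra).
    replace (Rpower 2 (1 - c2) / (Rpower 2 (1 - c2) - 1)) with (1 + / (Rpower 2 (1 - c2) - 1))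
      by (field; lra).
    apply Rplus_le_compat_l, Rinv_le_contravar; lra.
  - unfold Rdiv. rewrite !Rmult_1_l. apply Rinv_le_contravar; lra.
Qed.

(** * The high-frequency part *)

Lemma increment_le_of_derive_decay (f f' : R -> R) (K : R) :
  0 <= K -> (forall x, derivable_pt_lim f x (f' x)) -> (forall x, Rabs (f' x) <= K * decay x) ->
  forall x1 x2, Rabs (x1 - x2) <= 1 ->
  Rabs (f x1 - f x2) <= Rabs (x1 - x2) * (2 * K * decay x1).
Proof.
  intros HK Hd Hb.
  assert (Hmvt : forall x1 x2, x1 < x2 -> x2 - x1 <= 1 ->
            Rabs (f x1 - f x2) <= Rabs (x1 - x2) * (2 * K * decay x1)
         /\ Rabs (f x2 - f x1) <= Rabs (x2 - x1) * (2 * K * decay x2)).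
  { intros x1 x2 Hlt Hle.
    destruct (MVT_cor2 f f' x1 x2 Hlt) as [c [Ec Hc]]; [intros; apply Hd|].
    assert (Hc1 : Rabs (f' c) <= 2 * K * decay x1).
    { eapply Rle_trans; [apply Hb|]. replace (2 * K * decay x1) with (K * (2 * decay x1)) by ring.
      apply Rmult_le_compat_l; [lra|]. apply decay_shift. rewrite Rabs_right; lra. }
    assert (Hc2 : Rabs (f' c) <= 2 * K * decay x2).
    { eapply Rle_trans; [apply Hb|]. replace (2 * K * decay x2) with (K * (2 * decay x2)) by ring.
      apply Rmult_le_compat_l; [lra|]. apply decay_shift. rewrite Rabs_left1; lra. }
    rewrite (Rabs_minus_sym (f x1)), (Rabs_minus_sym x1), Ec, Rabs_mult, Rmult_comm.
    split; apply Rmult_le_compat_l; auto using Rabs_pos. }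
  intros x1 x2 H12. destruct (Rtotal_order x1 x2) as [h|[<-|h]].
  - rewrite Rabs_left in H12 by lra. apply (Hmvt x1 x2); lra.
  - rewrite !Rminus_diag, Rabs_R0. lra.
  - rewrite Rabs_right in H12 by lra. apply (Hmvt x2 x1); lra.
Qed.

Section HighFrequencyPart.

Variables (alpha : R) (Psi dPsi : R -> R -> R) (eps : Z -> Z -> R) (M a b K A : R).

Hypotheses (Halpha : 0 < alpha) (Hab : 1 / alpha < a /\ b < 1) (HK : 0 <= K) (HA : 0 <= A).

Hypothesis Hdecay : forall x v, a <= v <= b ->
  Rabs (Psi x v) <= K * decay x /\ Rabs (dPsi x v) <= K * decay x.

Hypothesis Hderiv : forall x v, a <= v <= b ->
  derivable_pt_lim (fun y => Psi y v) x (dPsi x v).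

Hypothesis Heps : forall (j : nat) (y : R), Rabs y <= Rpower 2 (INR j) * M ->
  forall N, sum_f_R0 (zsum_term (fun k => Rabs (eps (Z.of_nat j) k) * decay (y - IZR k))) N
            <= A * Rpower 2 (INR j / alpha).

Definition level (u v : R) (j : nat) : R := Series (zsum_term (inner_term eps Psi u v j)).

Lemma level_weight_eq (v : R) (j : nat) :
  Rpower 2 (- INR j * v) * Rpower 2 (INR j / alpha) = Rpower 2 (- (v - 1 / alpha)) ^ j.
Proof.
  rewrite <- Rpower_plus, <- Rpower_INR_mul by lra. f_equal. field. lra.
Qed.

Lemma inner_term_abs_le (u v : R) (j : nat) (k : Z) : a <= v <= b ->
  Rabs (inner_term eps Psi u v j k) <=
    Rpower 2 (- INR j * v) * K *
      (Rabs (eps (Z.of_nat j) k) * decay (Rpower 2 (INR j) * u - IZR k) +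
       Rabs (eps (Z.of_nat j) k) * decay (0 - IZR k)).
Proof.
  intro Hv. unfold inner_term. set (P := Rpower 2 (INR j)). set (W := Rpower 2 (- INR j * v)).
  assert (HW : 0 < W) by apply Rpower_pos.
  destruct (Hdecay (P * u - IZR k) v Hv) as [H1 _]. destruct (Hdecay (- IZR k) v Hv) as [H2 _].
  pose proof (Rabs_triang (Psi (P * u - IZR k) v) (- Psi (- IZR k) v)) as Htri.
  rewrite Rabs_Ropp in Htri. rewrite Rminus_0_l.
  rewrite !Rabs_mult, (Rabs_right W) by lra. pose proof (Rabs_pos (eps (Z.of_nat j) k)).
  replace (W * K * (Rabs (eps (Z.of_nat j) k) * decay (P * u - IZR k) +
                    Rabs (eps (Z.of_nat j) k) * decay (- IZR k)))
    with (W * Rabs (eps (Z.of_nat j) k) * (K * decay (P * u - IZR k) + K * decay (- IZR k)))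
    by ring.
  apply Rmult_le_compat_l; [nra|]. unfold Rminus at 1. lra.
Qed.

Lemma level_spec (u v : R) (j : nat) : Rabs u <= M -> a <= v <= b ->
  infinite_sum (zsum_term (inner_term eps Psi u v j)) (level u v j) /\
  Rabs (level u v j) <= 2 * K * A * Rpower 2 (- (v - 1 / alpha)) ^ j.
Proof.
  intros Hu Hv. set (P := Rpower 2 (INR j)). set (W := Rpower 2 (- INR j * v)).
  assert (HP : 0 < P) by apply Rpower_pos. assert (HW : 0 < W) by apply Rpower_pos.
  set (w := fun y k => Rabs (eps (Z.of_nat j) k) * decay (y - IZR k)).
  apply Series_dominated with (d := zsum_term (fun k => W * K * (w (P * u) k + w 0 k))).
  - intro n. eapply Rle_trans; [apply zsum_term_abs|]. apply zsum_term_le. intro k.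
    apply inner_term_abs_le, Hv.
  - intro N. rewrite sum_zsum_term_scal, sum_zsum_term_plus, <- level_weight_eq. fold W.
    assert (Hy : Rabs (P * u) <= P * M)
      by (rewrite Rabs_mult, (Rabs_right P) by lra; apply Rmult_le_compat_l; lra).
    assert (Hy0 : Rabs 0 <= P * M) by (rewrite Rabs_R0; pose proof (Rabs_pos u); nra).
    pose proof (Heps j _ Hy N) as Hs1. pose proof (Heps j _ Hy0 N) as Hs2.
    unfold w. replace (2 * K * A * (W * Rpower 2 (INR j / alpha)))
      with (W * K * (A * Rpower 2 (INR j / alpha) + A * Rpower 2 (INR j / alpha))) by ring.
    apply Rmult_le_compat_l; [nra|lra].
Qed.

Lemma level_weight_scaled_eq (v : R) (j : nat) :
  Rpower 2 (- INR j * v) * Rpower 2 (INR j) * Rpower 2 (INR j / alpha) =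
  Rpower 2 (1 - (v - 1 / alpha)) ^ j.
Proof.
  rewrite <- !Rpower_plus, <- Rpower_INR_mul by lra. f_equal. field. lra.
Qed.

Lemma inner_term_increment_le (u1 u2 v : R) (j : nat) (k : Z) : a <= v <= b ->
  Rpower 2 (INR j) * Rabs (u1 - u2) <= 1 ->
  Rabs (inner_term eps Psi u1 v j k - inner_term eps Psi u2 v j k) <=
    Rpower 2 (- INR j * v) * Rpower 2 (INR j) * Rabs (u1 - u2) * (2 * K) *
      (Rabs (eps (Z.of_nat j) k) * decay (Rpower 2 (INR j) * u1 - IZR k)).
Proof.
  intros Hv Hsmall. unfold inner_term.
  set (P := Rpower 2 (INR j)) in *. set (W := Rpower 2 (- INR j * v)).
  assert (HP : 0 < P) by apply Rpower_pos. assert (HW : 0 < W) by apply Rpower_pos.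
  replace (W * eps (Z.of_nat j) k * (Psi (P * u1 - IZR k) v - Psi (- IZR k) v) -
           W * eps (Z.of_nat j) k * (Psi (P * u2 - IZR k) v - Psi (- IZR k) v))
    with (W * eps (Z.of_nat j) k * (Psi (P * u1 - IZR k) v - Psi (P * u2 - IZR k) v))
    by ring.
  assert (Hx : Rabs ((P * u1 - IZR k) - (P * u2 - IZR k)) = P * Rabs (u1 - u2)).
  { replace ((P * u1 - IZR k) - (P * u2 - IZR k)) with (P * (u1 - u2)) by ring.
    rewrite Rabs_mult, Rabs_right by lra. reflexivity. }
  pose proof (increment_le_of_derive_decay (fun y => Psi y v) (fun y => dPsi y v) K HK
                (fun x => Hderiv x v Hv) (fun x => proj2 (Hdecay x v Hv))
                (P * u1 - IZR k) (P * u2 - IZR k) ltac:(lra)) as Hinc.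
  rewrite Hx in Hinc. cbv beta in Hinc.
  rewrite !Rabs_mult, (Rabs_right W) by lra. pose proof (Rabs_pos (eps (Z.of_nat j) k)).
  replace (W * P * Rabs (u1 - u2) * (2 * K) *
           (Rabs (eps (Z.of_nat j) k) * decay (P * u1 - IZR k)))
    with (W * Rabs (eps (Z.of_nat j) k) * (P * Rabs (u1 - u2) * (2 * K * decay (P * u1 - IZR k))))
    by ring.
  apply Rmult_le_compat_l; [nra|exact Hinc].
Qed.

Lemma level_increment_le (u1 u2 v : R) (j : nat) :
  Rabs u1 <= M -> Rabs u2 <= M -> a <= v <= b ->
  Rpower 2 (INR j) * Rabs (u1 - u2) <= 1 ->
  Rabs (level u1 v j - level u2 v j) <=
    2 * K * A * Rabs (u1 - u2) * Rpower 2 (1 - (v - 1 / alpha)) ^ j.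
Proof.
  intros Hu1 Hu2 Hv Hsmall.
  destruct (level_spec u1 v j Hu1 Hv) as [S1 _]. destruct (level_spec u2 v j Hu2 Hv) as [S2 _].
  set (P := Rpower 2 (INR j)) in *. set (W := Rpower 2 (- INR j * v)).
  assert (HP : 0 < P) by apply Rpower_pos. assert (HW : 0 < W) by apply Rpower_pos.
  set (d := Rabs (u1 - u2)) in *. assert (Hd : 0 <= d) by apply Rabs_pos.
  apply (Un_cv_abs_le (fun N => sum_f_R0 (zsum_term (inner_term eps Psi u1 v j)) N -
                                sum_f_R0 (zsum_term (inner_term eps Psi u2 v j)) N)).
  { intros e He. destruct (CV_minus _ _ _ _ S1 S2 e He) as [N HN]. exists N. exact HN. }
  intro N. rewrite <- sum_zsum_term_minus.
  eapply Rle_trans; [apply sum_f_R0_triangle|].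
  eapply Rle_trans.
  { apply sum_Rle. intros n _. eapply Rle_trans; [apply zsum_term_abs|].
    apply zsum_term_le. intro k. apply inner_term_increment_le; assumption. }
  rewrite sum_zsum_term_scal.
  assert (Hy : Rabs (P * u1) <= P * M)
    by (rewrite Rabs_mult, (Rabs_right P) by lra; apply Rmult_le_compat_l; lra).
  pose proof (Heps j _ Hy N) as Hs.
  rewrite <- level_weight_scaled_eq. fold P W.
  replace (2 * K * A * d * (W * P * Rpower 2 (INR j / alpha)))
    with (W * P * d * (2 * K) * (A * Rpower 2 (INR j / alpha))) by ring.
  apply Rmult_le_compat_l; [|exact Hs].
  apply Rmult_le_pos; [|lra]. apply Rmult_le_pos; [|lra]. nra.
Qed.

Lemma holder_exponent_range (v : R) : a <= v <= b -> 0 < v - 1 / alpha < 1.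
Proof.
  intro Hv. assert (0 < 1 / alpha) by (apply Rdiv_lt_0_compat; lra). lra.
Qed.

Lemma level_summable (u v : R) : Rabs u <= M -> a <= v <= b ->
  infinite_sum (level u v) (Series (level u v)).
Proof.
  intros Hu Hv. set (q := Rpower 2 (- (v - 1 / alpha))).
  pose proof (holder_exponent_range v Hv).
  assert (Hq : 0 <= q < 1).
  { split; [apply Rlt_le, Rpower_pos|]. rewrite <- (Rpower_O 2) by lra.
    apply Rpower_lt; lra. }
  apply (Series_dominated _ (fun j => 2 * K * A * q ^ j) (2 * K * A * (1 / (1 - q)))).
  - intro j. apply (level_spec u v j Hu Hv).
  - intro N. rewrite (sum_eq _ (fun j => q ^ j * (2 * K * A))) by (intros; ring).
    rewrite <- scal_sum. apply Rmult_le_compat_l; [nra|].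
    apply (sum_geom_decreasing_below q 1 (fun _ => true)); [lra|lra|].
    intros n _. rewrite <- (pow1 n). apply pow_incr. lra.
Qed.

Lemma Xdd_is_level (u v : R) : Rabs u <= M -> a <= v <= b ->
  Xdd_is eps Psi u v (Series (level u v)).
Proof.
  intros Hu Hv. exists (level u v). split.
  - intro j. apply (level_spec u v j Hu Hv).
  - apply level_summable; assumption.
Qed.

Lemma level_diff_le (u1 u2 v : R) (j : nat) :
  Rabs u1 <= M -> Rabs u2 <= M -> a <= v <= b ->
  Rabs (level u1 v j - level u2 v j) <=
    4 * K * A *
      ((if coarse_level (Rabs (u1 - u2)) j
        then Rabs (u1 - u2) * Rpower 2 (1 - (v - 1 / alpha)) ^ j else 0) +
       (if negb (coarse_level (Rabs (u1 - u2)) j) then Rpower 2 (- (v - 1 / alpha)) ^ j else 0)).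
Proof.
  intros Hu1 Hu2 Hv. pose proof (Rabs_pos (u1 - u2)).
  pose proof (pow_le (Rpower 2 (1 - (v - 1 / alpha))) j (Rlt_le _ _ (Rpower_pos _ _))).
  unfold coarse_level.
  destruct (Rle_dec (Rpower 2 (INR j) * Rabs (u1 - u2)) 1) as [Hs|Hs]; cbn [negb].
  - pose proof (level_increment_le u1 u2 v j Hu1 Hu2 Hv Hs).
    assert (0 <= K * A * (Rabs (u1 - u2) * Rpower 2 (1 - (v - 1 / alpha)) ^ j))
      by (apply Rmult_le_pos; nra).
    nra.
  - destruct (level_spec u1 v j Hu1 Hv) as [_ B1]. destruct (level_spec u2 v j Hu2 Hv) as [_ B2].
    assert (Rabs (level u1 v j - level u2 v j) <= Rabs (level u1 v j) + Rabs (level u2 v j))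
      by (unfold Rminus; rewrite <- (Rabs_Ropp (level u2 v j)); apply Rabs_triang).
    lra.
Qed.

Lemma level_sum_increment_le (u1 u2 v : R) :
  Rabs u1 <= M -> Rabs u2 <= M -> a <= v <= b -> u1 <> u2 ->
  Rabs (Series (level u1 v) - Series (level u2 v)) <=
    4 * K * A * holder_constant (v - 1 / alpha) * Rpower (Rabs (u1 - u2)) (v - 1 / alpha).
Proof.
  intros Hu1 Hu2 Hv Hneq. pose proof (holder_exponent_range v Hv) as Hc.
  pose proof (level_diff_le u1 u2 v) as Hlevel.
  set (c := v - 1 / alpha) in *. set (d := Rabs (u1 - u2)) in *.
  assert (Hd : 0 < d) by (apply Rabs_pos_lt; lra).
  set (q := Rpower 2 (- c)) in *. set (r := Rpower 2 (1 - c)) in *. set (Y := Rpower d c).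
  assert (Hq : 0 <= q < 1).
  { split; [apply Rlt_le, Rpower_pos|]. rewrite <- (Rpower_O 2) by lra. apply Rpower_lt; lra. }
  assert (Hr : 1 < r) by (rewrite <- (Rpower_O 2) at 1 by lra; apply Rpower_lt; lra).
  assert (HY : 0 < Y) by apply Rpower_pos.
  set (small := coarse_level d) in *.
  apply (Un_cv_abs_le (sum_f_R0 (fun j => level u1 v j - level u2 v j))).
  { intros e He. destruct (CV_minus _ _ _ _ (level_summable u1 v Hu1 Hv)
                            (level_summable u2 v Hu2 Hv) e He) as [N HN].
    exists N. intros n Hn. rewrite minus_sum. apply HN, Hn. }
  intro N. eapply Rle_trans; [apply sum_f_R0_triangle|].
  eapply Rle_trans; [apply sum_Rle; intros j _; apply Hlevel; assumption|].
  rewrite (sum_eq _ (fun j => ((if small j then d * r ^ j else 0) +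
                              (if negb (small j) then q ^ j else 0)) * (4 * K * A)))
    by (intros; ring).
  rewrite <- scal_sum, plus_sum.
  pose proof (sum_geom_increasing_below d r Y small Hr ltac:(lra) ltac:(lra)) as Hlow.
  pose proof (sum_geom_decreasing_below q Y (fun j => negb (small j)) Hq ltac:(lra)) as Hhigh.
  assert (Hsum : sum_f_R0 (fun j => if small j then d * r ^ j else 0) N +
                 sum_f_R0 (fun j => if negb (small j) then q ^ j else 0) N <=
                 holder_constant c * Y).
  { unfold holder_constant. fold q r.
    replace ((r / (r - 1) + 1 / (1 - q)) * Y) with (Y * (r / (r - 1)) + Y / (1 - q))
      by (field; lra).
    apply Rplus_le_compat; [apply Hlow|apply Hhigh]; intros j Hj; unfold small, coarse_level in Hj;
      destruct (Rle_dec (Rpower 2 (INR j) * d) 1) as [Hs|Hs]; try discriminate.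
    - apply dyadic_small_le; lra.
    - apply dyadic_large_le; lra. }
  replace (4 * K * A * holder_constant c * Y) with (4 * K * A * (holder_constant c * Y)) by ring.
  apply Rmult_le_compat_l; [nra|exact Hsum].
Qed.
End HighFrequencyPart.

Lemma le_K_decay (K x s t : R) :
  (3 + Rabs x) ^ 2 * (s + t) <= K -> 0 <= s -> 0 <= t -> s <= K * decay x /\ t <= K * decay x.
Proof.
  intros H Hs Ht. unfold decay. pose proof (Rabs_pos x).
  assert (Hp : 0 < (3 + Rabs x) ^ 2) by nra.
  split; apply Rmult_le_reg_l with ((3 + Rabs x) ^ 2); auto;
    rewrite <- Rmult_assoc, (Rmult_comm _ K), Rmult_assoc, Rinv_r by lra; nra.
Qed.

Lemma Psi_props_decay (alpha a b : R) (Psi dPsi : R -> R -> R) :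
  Psi_props alpha Psi dPsi -> 1 / alpha < a -> a <= b -> b < 1 ->
  exists K, 0 <= K /\
    (forall x v, a <= v <= b -> Rabs (Psi x v) <= K * decay x /\ Rabs (dPsi x v) <= K * decay x) /\
    (forall x v, a <= v <= b -> derivable_pt_lim (fun y => Psi y v) x (dPsi x v)).
Proof.
  intros [Hderiv [_ Hbound]] Ha Hab Hb. destruct (Hbound a b Ha Hab Hb) as [K HK].
  exists K. split; [|split].
  - pose proof (HK 0 a ltac:(lra)). pose proof (Rabs_pos (Psi 0 a)).
    pose proof (Rabs_pos (dPsi 0 a)). rewrite Rabs_R0 in *. nra.
  - intros x v Hv. apply le_K_decay; auto using Rabs_pos.
  - intros x v Hv. apply Hderiv. lra.
Qed.

Theorem mainTheorem6 (alpha : R) (Halpha : 1 < alpha < 2)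
  (Psi dPsi : R -> R -> R) (HPsi : Psi_props alpha Psi dPsi)
  (eps : Z -> Z -> R)
  (H0 : Omega0_bound alpha eps) (H1 : Omega1_bound alpha eps)
  (M a b : R) (HM : 0 < M) (Hab : 1 / alpha < a /\ a < b /\ b < 1) :
  exists C : R,
    forall u1 u2 v : R,
      -M <= u1 <= M -> -M <= u2 <= M -> a <= v <= b ->
      exists x1 x2 : R,
        Xdd_is eps Psi u1 v x1 /\ Xdd_is eps Psi u2 v x2 /\
        (u1 <> u2 ->
         Rabs (x1 - x2) / Rpower (Rabs (u1 - u2)) (v - 1 / alpha) <= C).
Proof.
  destruct Hab as [Ha [Hab Hb]].
  destruct (Psi_props_decay alpha a b Psi dPsi HPsi Ha (Rlt_le _ _ Hab) Hb)
    as [K [HK [Hdecay Hderiv]]].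
  destruct (eps_weighted_sum_bound alpha eps M ltac:(lra) HM H0 H1) as [A [HA Heps]].
  assert (Hinv : 0 < 1 / alpha) by (apply Rdiv_lt_0_compat; lra).
  assert (Halpha' : 0 < alpha) by lra. assert (Hab' : 1 / alpha < a /\ b < 1) by lra.
  exists (4 * K * A * (Rpower 2 (1 - (b - 1 / alpha)) / (Rpower 2 (1 - (b - 1 / alpha)) - 1)
                       + 1 / (1 - Rpower 2 (- (a - 1 / alpha))))).
  intros u1 u2 v Hu1 Hu2 Hv. apply Rabs_le in Hu1, Hu2.
  exists (Series (level Psi eps u1 v)), (Series (level Psi eps u2 v)).
  split; [exact (Xdd_is_level _ _ _ _ _ _ _ _ _ Halpha' Hab' HK HA Hdecay Heps u1 v Hu1 Hv)|].
  split; [exact (Xdd_is_level _ _ _ _ _ _ _ _ _ Halpha' Hab' HK HA Hdecay Heps u2 v Hu2 Hv)|].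
  intro Hneq.
  pose proof (level_sum_increment_le _ _ _ _ _ _ _ _ _ Halpha' Hab' HK HA Hdecay Hderiv Heps
                u1 u2 v Hu1 Hu2 Hv Hneq) as Hinc.
  pose proof (holder_constant_le (a - 1 / alpha) (v - 1 / alpha) (b - 1 / alpha)
                ltac:(lra) ltac:(lra)) as Hconst.
  pose proof (Rpower_pos (Rabs (u1 - u2)) (v - 1 / alpha)) as Hpow.
  apply Rle_div_l; [exact Hpow|]. eapply Rle_trans; [exact Hinc|].
  apply Rmult_le_compat_r; [lra|]. apply Rmult_le_compat_l; [nra|exact Hconst].
Qed.
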